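(* Let $K\ge 1$ be an integer, let $h_1,\dots,h_K>0$ and $\sigma^2>0$ be real numbers, and let $0<\epsilon<K$. For $g\in\mathbb{R}$ and $b\in\mathbb{R}^K$ let $\mathsf{MSE}(g,b)=\sum_{k=1}^{K}(g h_k b_k-1)^2+\sigma^2 g^2$ and $\mathsf{PW}(b)=\sum_{k=1}^K b_k^2$. Consider the problem of minimizing $\mathsf{PW}(b)$ over $g\in\mathbb{R}$, $b\in\mathbb{R}^K$ subject to $\mathsf{MSE}(g,b)\le\epsilon$. Put $c_k=1/h_k^2$. Then the equation $$M=\frac{\sum_{k=1}^{K}c_k\left(\frac{M}{c_k+M}\right)^2}{\epsilon-\sum_{k=1}^{K}\left(\frac{c_k}{c_k+M}\right)^2}$$ has a unique solution $M\in(0,\infty)$, and with $\tau_k=\dfrac{1}{1+M h_k^2}$ (so that $\sum_k\tau_k^2<\epsilon$), the problem has minimum value $$\mathsf{PW}^\star=\sigma^2\,\frac{\sum_{k=1}^{K}(1-\tau_k)^2/h_k^2}{\epsilon-\sum_{k=1}^{K}\tau_k^2},$$ attained at $$g^\star=\frac{1}{\sigma}\sqrt{\epsilon-\sum_{k=1}^{K}\tau_k^2},\qquad b_k^\star=\frac{\sigma M h_k}{(1+M h_k^2)\sqrt{\epsilon-\sum_{j=1}^{K}\tau_j^2}},\quad k=1,\dots,K.$$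
   Context: This models an over-the-air computation system with $K$ sensors: $h_k$ is the channel coefficient magnitude of sensor $k$, $b_k$ its transmit scaling factor, $g$ the receiver scaling factor, $\sigma^2$ the receiver noise variance and $\epsilon$ a limit on the computation mean-squared error. All variables are real, $h_k>0$, $\sigma=\sqrt{\sigma^2}>0$. *)

From mathcomp Require Import all_boot all_order all_algebra.
From mathcomp Require Import reals.
Set Implicit Arguments. Unset Strict Implicit. Unset Printing Implicit Defensive.
Import Order.TTheory GRing.Theory Num.Theory.
Local Open Scope ring_scope.

Section OTA.
Variables (R : realType) (K : nat).

Definition MSE (h : 'I_K -> R) (sigma2 : R) (g : R) (b : 'I_K -> R) : R :=
  \sum_(k < K) (g * h k * b k - 1) ^+ 2 + sigma2 * g ^+ 2.

Definition PW (b : 'I_K -> R) : R := \sum_(k < K) b k ^+ 2.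

Definition cc (h : 'I_K -> R) (k : 'I_K) : R := 1 / h k ^+ 2.

Definition Meq (h : 'I_K -> R) (eps M : R) : Prop :=
  M = (\sum_(k < K) cc h k * (M / (cc h k + M)) ^+ 2)
      / (eps - \sum_(k < K) (cc h k / (cc h k + M)) ^+ 2).

Definition tau (h : 'I_K -> R) (M : R) (k : 'I_K) : R := 1 / (1 + M * h k ^+ 2).

Definition PWstar (h : 'I_K -> R) (sigma2 eps M : R) : R :=
  sigma2 * (\sum_(k < K) (1 - tau h M k) ^+ 2 / h k ^+ 2)
         / (eps - \sum_(k < K) tau h M k ^+ 2).

Definition gstar (h : 'I_K -> R) (sigma2 eps M : R) : R :=
  1 / Num.sqrt sigma2 * Num.sqrt (eps - \sum_(k < K) tau h M k ^+ 2).

Definition bstar (h : 'I_K -> R) (sigma2 eps M : R) (k : 'I_K) : R :=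
  Num.sqrt sigma2 * M * h k /
    ((1 + M * h k ^+ 2) * Num.sqrt (eps - \sum_(j < K) tau h M j ^+ 2)).

End OTA.

From mathcomp Require Import all_boot all_order all_algebra.
From mathcomp Require Import reals.
From mathcomp Require Import all_classical all_reals all_analysis.
From mathcomp.algebra_tactics Require Import ring lra.
Import Order.TTheory GRing.Theory Num.Theory.
Import numFieldNormedType.Exports.
Local Open Scope ring_scope.

(* Write tau_k(M) = 1 / (1 + M h_k^2) and F(M) = sum_k tau_k(M).
   1. Since c_k / (c_k + M) = tau_k(M) and c_k (M / (c_k + M))^2 =
      M (tau_k - tau_k^2), the fixed-point equation for M > 0 is equivalent
      to F(M) = eps  (lemma [Meq_iff]).
   2. F is continuous and strictly decreasing on [0, oo), with F(0) = K > eps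
      and F(M) <= eps for M large enough, so the intermediate value theorem
      gives a unique root M > 0 ([tau_sum_root], [tau_sum_inj]).  As
      0 < tau_k < 1, sum_k tau_k^2 < F(M) = eps.
   3. Completing a square gives, for every k, g and b,
        M tau_k <= g^2 b_k^2 + M (g h_k b_k - 1)^2.
      Summing and using MSE(g, b) <= eps yields sigma^2 M <= PW(b)
      ([PW_lower_bound]); the explicit (gstar, bstar) meets the budget with
      equality and has power PW* = sigma^2 M, hence is optimal. *)

Lemma ltr_sum_ord (R : numDomainType) (K : nat) (F G : 'I_K -> R) :
  (0 < K)%N -> (forall i, F i < G i) -> \sum_(i < K) F i < \sum_(i < K) G i.
Proof. by move=> K_gt0 FG; apply: ltr_sum => //; apply/hasP; exists (Ordinal K_gt0). Qed.

Lemma inv_affine_continuous (R : realType) (c x : R) : 0 <= c -> 0 <= x ->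
  {for x, continuous (fun M : R => 1 / (1 + M * c))}.
Proof.
move=> c_ge0 x_ge0.
have -> : (fun M : R => 1 / (1 + M * c)) = (fun M => ((cst 1 + (id \* cst c)) M)^-1).
  by apply/funext => M; rewrite div1r.
apply: continuousV; first by rewrite /= gt_eqF // ltr_pwDl // mulr_ge0.
apply: continuousD; first exact: cst_continuous.
by apply: continuousM; [exact: cvg_id | exact: cst_continuous].
Qed.

Section TauSum.
Set Implicit Arguments. Unset Strict Implicit.
Variables (R : realType) (K : nat) (h : 'I_K -> R).
Hypothesis h_gt0 : forall k, 0 < h k.

(* F(M) = sum_k tau_k(M), the function whose level set {F = eps} is the
   solution set of the fixed-point equation. *)
Definition tau_sum (M : R) : R := \sum_(k < K) tau h M k.

Lemma tau_den_gt0 M k : 0 <= M -> 0 < 1 + M * h k ^+ 2.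
Proof. by move=> M_ge0; rewrite ltr_pwDl // mulr_ge0 // exprn_ge0 // ltW. Qed.

Lemma tau_gt0 M k : 0 <= M -> 0 < tau h M k.
Proof. by move=> M_ge0; rewrite /tau divr_gt0 // tau_den_gt0. Qed.

Lemma tau_lt1 M k : 0 < M -> tau h M k < 1.
Proof.
move=> M_gt0; rewrite /tau ltr_pdivrMr ?tau_den_gt0 ?ltW // mul1r.
by rewrite ltrDl mulr_gt0 // exprn_gt0.
Qed.

Lemma tau_decr M1 M2 k : 0 <= M1 -> M1 < M2 -> tau h M2 k < tau h M1 k.
Proof.
move=> M1_ge0 lt12; have M2_ge0 : 0 <= M2 by apply: le_trans (ltW lt12).
rewrite /tau !div1r ltf_pV2 ?posrE ?tau_den_gt0 //.
by rewrite ltrD2l ltr_pM2r // exprn_gt0.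
Qed.

Lemma tau_sum0 : tau_sum 0 = K%:R.
Proof.
rewrite /tau_sum /tau; under eq_bigr do rewrite mul0r addr0 divr1.
by rewrite sumr_const card_ord.
Qed.

Lemma tau_sum_continuous x : 0 <= x -> {for x, continuous tau_sum}.
Proof.
move=> x_ge0; apply: (cvg_big add_continuous) => k _.
by apply: inv_affine_continuous => //; rewrite exprn_ge0 // ltW.
Qed.

Lemma tau_sum_decr M1 M2 : (0 < K)%N -> 0 <= M1 -> M1 < M2 ->
  tau_sum M2 < tau_sum M1.
Proof. by move=> K_gt0 M1_ge0 lt12; apply: ltr_sum_ord => // k; exact: tau_decr. Qed.

Lemma tau_sum_inj M1 M2 : (0 < K)%N -> 0 < M1 -> 0 < M2 ->
  tau_sum M1 = tau_sum M2 -> M1 = M2.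
Proof.
move=> K_gt0 M1_gt0 M2_gt0 eqF.
case: (ltgtP M1 M2) => // [lt12|lt21].
- by move: (tau_sum_decr K_gt0 (ltW M1_gt0) lt12); rewrite eqF ltxx.
- by move: (tau_sum_decr K_gt0 (ltW M2_gt0) lt21); rewrite eqF ltxx.
Qed.

(* Since 0 < tau_k < 1 for M > 0, sum_k tau_k^2 < F(M). *)
Lemma tau_sum_sq_lt M : (0 < K)%N -> 0 < M ->
  \sum_(k < K) tau h M k ^+ 2 < tau_sum M.
Proof.
move=> K_gt0 M_gt0; apply: ltr_sum_ord => // k.
by rewrite expr2 gtr_pMr ?tau_gt0 ?tau_lt1 ?ltW.
Qed.

Lemma cc_ratio M k : 0 <= M -> cc h k / (cc h k + M) = tau h M k.
Proof.
move=> M_ge0; have hk := h_gt0 k; have den := tau_den_gt0 k M_ge0.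
by rewrite /cc /tau; field; rewrite !gt_eqF.
Qed.

Lemma cc_weighted M k : 0 <= M ->
  cc h k * (M / (cc h k + M)) ^+ 2 = M * (tau h M k - tau h M k ^+ 2).
Proof.
move=> M_ge0; have hk := h_gt0 k; have den := tau_den_gt0 k M_ge0.
by rewrite /cc /tau; field; rewrite !gt_eqF.
Qed.

Lemma Meq_iff eps M : (0 < K)%N -> 0 < M -> Meq h eps M <-> tau_sum M = eps.
Proof.
move=> K_gt0 M_gt0; have sq_lt := tau_sum_sq_lt K_gt0 M_gt0; rewrite /Meq.
under eq_bigr do rewrite cc_weighted ?ltW //.
under [X in _ / (_ - X)]eq_bigr do rewrite cc_ratio ?ltW //.
rewrite -mulr_sumr sumrB -/(tau_sum M).
set A := tau_sum M in sq_lt *; set B := \sum_(i < K) tau h M i ^+ 2 in sq_lt *.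
have M_neq0 : M != 0 by rewrite gt_eqF.
have [den0|den_neq0] := eqVneq (eps - B) 0.
  rewrite den0 invr0 mulr0; split => [M0|AE]; first by rewrite M0 eqxx in M_neq0.
  by move: sq_lt den0; rewrite AE; lra.
split => [ME|AE]; last by rewrite AE mulfK.
have : M * (eps - B) = M * (A - B) by rewrite {1}ME mulfVK.
by move/(mulfI M_neq0)/eqP; rewrite subr_eq addrNK => /eqP.
Qed.

(* F eventually drops below any eps > 0: at M0 = (K / eps) sum_k c_k every
   term is at most eps / K. *)
Lemma tau_sum_small eps : (0 < K)%N -> 0 < eps ->
  exists2 M0, 0 <= M0 & tau_sum M0 <= eps.
Proof.
move=> K_gt0 eps_gt0; set S := \sum_(k < K) cc h k.
have cc_ge0 k : 0 <= cc h k by rewrite /cc divr_ge0 // exprn_ge0 // ltW.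
have cc_leS k : cc h k <= S by rewrite /S (bigD1 k) //= lerDl sumr_ge0.
have Ke_gt0 : 0 < K%:R / eps by rewrite divr_gt0 // ltr0n.
have S_ge0 : 0 <= S by rewrite sumr_ge0.
set M0 := K%:R / eps * S.
have M0_ge0 : 0 <= M0 := mulr_ge0 (ltW Ke_gt0) S_ge0.
have term_le k : tau h M0 k <= eps / K%:R.
  have hk := h_gt0 k; have den := tau_den_gt0 k M0_ge0.
  rewrite /tau div1r -[eps / _]invf_div ler_pV2 ?inE ?unitfE ?gt_eqF //.
  have -> : M0 * h k ^+ 2 = K%:R / eps * (S * h k ^+ 2) by rewrite /M0 [RHS]mulrA.
  rewrite (le_trans _ (ler_wpDl ler01 (lexx _))) // ler_peMr ?(ltW Ke_gt0) //.
  by have := cc_leS k; rewrite /cc ler_pdivrMr ?exprn_gt0.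
exists M0 => //; apply: (@le_trans _ _ (\sum_(k < K) (eps / K%:R))).
  by apply: ler_sum => k _; exact: term_le.
by rewrite sumr_const card_ord -[_ *+ K]mulr_natr mulfVK // pnatr_eq0 -lt0n.
Qed.

Lemma tau_sum_root eps : (0 < K)%N -> 0 < eps -> eps < K%:R ->
  exists2 M, 0 < M & tau_sum M = eps.
Proof.
move=> K_gt0 eps_gt0 eps_ltK.
have [M0 M0_ge0 FM0] := tau_sum_small K_gt0 eps_gt0.
have [M M_in FM] : exists2 M, M \in `[0, M0] & tau_sum M = eps.
  apply: IVT => //; last by rewrite tau_sum0 ge_min le_max FM0 (ltW eps_ltK) orbT.
  apply: continuous_in_subspaceT => x; rewrite inE /= in_itv /= => /andP[x_ge0 _].
  exact: tau_sum_continuous.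
exists M => //; move: M_in; rewrite in_itv /= => /andP[M_ge0 _].
rewrite lt_neqAle M_ge0 andbT eq_sym; apply/eqP => M_eq0.
by move: eps_ltK; rewrite -FM M_eq0 tau_sum0 ltxx.
Qed.

End TauSum.

Section Optimality.
Set Implicit Arguments. Unset Strict Implicit.
Variables (R : realType) (K : nat) (h : 'I_K -> R) (sigma2 eps M : R).
Hypothesis h_gt0 : forall k, 0 < h k.
Hypothesis sigma2_gt0 : 0 < sigma2.
Hypothesis M_gt0 : 0 < M.

(* Step 3, per sensor: completing the square in g b_k,
     g^2 b^2 + M (g h b - 1)^2 - M tau = ((1 + M h^2) g b - M h)^2 / (1 + M h^2). *)
Lemma tau_power_error_tradeoff (g : R) (b : 'I_K -> R) k :
  M * tau h M k <= g ^+ 2 * b k ^+ 2 + M * (g * h k * b k - 1) ^+ 2.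
Proof.
have den := tau_den_gt0 h_gt0 k (ltW M_gt0); rewrite -subr_ge0.
have -> : g ^+ 2 * b k ^+ 2 + M * (g * h k * b k - 1) ^+ 2 - M * tau h M k
    = ((1 + M * h k ^+ 2) * (g * b k) - M * h k) ^+ 2 / (1 + M * h k ^+ 2).
  by rewrite /tau; field; rewrite gt_eqF.
by rewrite divr_ge0 ?sqr_ge0 ?ltW.
Qed.

(* Summing the tradeoff: every feasible (g, b) has power at least sigma^2 M
   when F(M) = eps.  The case g = 0 is infeasible because MSE(0, b) = K > eps. *)
Lemma PW_lower_bound g b : eps < K%:R -> tau_sum h M = eps ->
  MSE h sigma2 g b <= eps -> sigma2 * M <= PW b.
Proof.
move=> eps_ltK FM feasible.
have summed : \sum_(k < K) M * tau h M k
    <= \sum_(k < K) (g ^+ 2 * b k ^+ 2 + M * (g * h k * b k - 1) ^+ 2).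
  by apply: ler_sum => k _; exact: tau_power_error_tradeoff.
rewrite -mulr_sumr -/(tau_sum h M) FM big_split /= -!mulr_sumr in summed.
move: feasible; rewrite /MSE /PW.
set E := \sum_(k < K) (g * h k * b k - 1) ^+ 2 in summed *.
set P := \sum_(k < K) b k ^+ 2 in summed *.
move=> feasible.
have g_neq0 : g != 0.
  apply/eqP => g0; move: feasible; rewrite /E g0.
  under eq_bigr do rewrite !mul0r sub0r sqrrN expr1n.
  by rewrite sumr_const card_ord expr0n /= mulr0 addr0 leNgt eps_ltK.
have g2_gt0 : 0 < g ^+ 2 by rewrite exprn_even_gt0 // g_neq0.
have M_feasible := ler_wpM2l (ltW M_gt0) feasible.
by rewrite -(ler_pM2l g2_gt0); nra.
Qed.

Hypothesis sq_lt : \sum_(k < K) tau h M k ^+ 2 < eps.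
Let D := eps - \sum_(k < K) tau h M k ^+ 2.
Let D_gt0 : 0 < D. Proof. by rewrite /D subr_gt0. Qed.

(* The candidate (gstar, bstar) exhausts the MSE budget: each error term equals
   -tau_k and the noise term equals D. *)
Lemma MSE_star : MSE h sigma2 (gstar h sigma2 eps M) (bstar h sigma2 eps M) = eps.
Proof.
rewrite /MSE /gstar /bstar -/D.
have sqrtD_gt0 : 0 < Num.sqrt D by rewrite sqrtr_gt0.
have sqrt_sigma2_gt0 : 0 < Num.sqrt sigma2 by rewrite sqrtr_gt0.
have err k : 1 / Num.sqrt sigma2 * Num.sqrt D * h k *
    (Num.sqrt sigma2 * M * h k / ((1 + M * h k ^+ 2) * Num.sqrt D)) - 1 = - tau h M k.
  have den := tau_den_gt0 h_gt0 k (ltW M_gt0).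
  by rewrite /tau; field; rewrite !gt_eqF.
under eq_bigr do rewrite err sqrrN.
rewrite exprMn expr_div_n expr1n !sqr_sqrtr ?ltW //.
by rewrite mulrA mulrCA mulfV ?gt_eqF // mul1r /D; ring.
Qed.

Lemma PW_star : PW (bstar h sigma2 eps M) = PWstar h sigma2 eps M.
Proof.
rewrite /PW /PWstar /bstar -/D mulr_sumr mulr_suml; apply: eq_bigr => k _.
have den := tau_den_gt0 h_gt0 k (ltW M_gt0); have hk := h_gt0 k.
rewrite expr_div_n !exprMn !sqr_sqrtr ?ltW // /tau.
by field; rewrite !gt_eqF.
Qed.

Lemma PWstar_root : tau_sum h M = eps -> PWstar h sigma2 eps M = sigma2 * M.
Proof.
move=> FM; rewrite /PWstar -/D.
have -> : \sum_(k < K) (1 - tau h M k) ^+ 2 / h k ^+ 2 = M * D.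
  rewrite /D -FM /tau_sum -sumrB mulr_sumr; apply: eq_bigr => k _.
  have den := tau_den_gt0 h_gt0 k (ltW M_gt0); have hk := h_gt0 k.
  by rewrite /tau; field; rewrite !gt_eqF.
by rewrite mulrA mulfK // gt_eqF.
Qed.

End Optimality.

Theorem theorem2 (R : realType) (K : nat) (h : 'I_K -> R) (sigma2 eps : R) :
  (1 <= K)%N ->
  (forall k, 0 < h k) ->
  0 < sigma2 ->
  0 < eps -> eps < K%:R ->
  exists M : R,
    [/\ 0 < M, Meq h eps M,
        (forall M' : R, 0 < M' -> Meq h eps M' -> M' = M),
        \sum_(k < K) tau h M k ^+ 2 < eps &
        [/\ MSE h sigma2 (gstar h sigma2 eps M) (bstar h sigma2 eps M) <= eps,
            PW (bstar h sigma2 eps M) = PWstar h sigma2 eps M &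
            (forall (g : R) (b : 'I_K -> R),
               MSE h sigma2 g b <= eps -> PWstar h sigma2 eps M <= PW b)]].
Proof.
move=> K_gt0 h_gt0 sigma2_gt0 eps_gt0 eps_ltK.
have [M M_gt0 FM] := tau_sum_root h_gt0 K_gt0 eps_gt0 eps_ltK.
have sq_lt : \sum_(k < K) tau h M k ^+ 2 < eps by rewrite -FM tau_sum_sq_lt.
exists M; split => //.
- exact/(Meq_iff h_gt0 _ K_gt0 M_gt0).
- move=> M' M'_gt0 /(Meq_iff h_gt0 _ K_gt0 M'_gt0) FM'.
  by apply: (tau_sum_inj h_gt0 K_gt0) => //; rewrite FM FM'.
split.
- by rewrite MSE_star.
- exact: PW_star.
- by move=> g b feasible; rewrite PWstar_root //; exact: PW_lower_bound feasible.
Qed.
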